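(* $\widehat{\mathbb{C}^{\mathcal{D}_0}}$ is an algebraically closed field, $\widehat{\mathbb{R}^{\mathcal{D}_0}}$ is a real closed field, and $\widehat{\mathbb{C}^{\mathcal{D}_0}}=\widehat{\mathbb{R}^{\mathcal{D}_0}}\oplus i\,\widehat{\mathbb{R}^{\mathcal{D}_0}}$.
   Context: Fix $d\in\mathbb{N}$ and let $\mathcal{D}_0=\mathcal{D}(\mathbb{R}^d)$ (compactly supported $C^\infty$ functions $\mathbb{R}^d\to\mathbb{C}$). For $\varphi\in\mathcal{D}_0$ let $R_\varphi=\sup\{\|x\|:\varphi(x)\neq0\}$ if $\varphi\neq0$, $R_0=1$. For $n\in\mathbb{N}$, $\mathcal{D}_n$ is the set of $\varphi\in\mathcal{D}_0$ that are real-valued, even, with $R_\varphi\le1/n$, $\int\varphi=1$, $\int x^\alpha\varphi(x)dx=0$ for $1\le|\alpha|\le n$, $\int|\varphi|\le1+1/n$, and $\sup_x|\partial^\alpha\varphi(x)|\le R_\varphi^{-2(|\alpha|+d)}$ for $|\alpha|\le n$. Let $\mathfrak c=\mathrm{card}(\mathbb{R})$ and let $\mathcal{U}$ be a fixed free ultrafilter on $\mathcal{D}_0$ containing every $\mathcal{D}_n$ and which is $\mathfrak{c}^+$-good (for every $\Gamma\subseteq\mathcal{D}_0$ with $\mathrm{card}\,\Gamma\le\mathfrak c$ and every map $R$ from finite subsets of $\Gamma$ into $\mathcal{U}$ with $X\subseteq Y\Rightarrow R(X)\supseteq R(Y)$, there is a map $S$ from finite subsets of $\Gamma$ into $\mathcal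 U$ with $S(X\cup Y)=S(X)\cap S(Y)$ and $S(X)\subseteq R(X)$). A property $P(\varphi)$ holds a.e. if $\{\varphi\in\mathcal{D}_0:P(\varphi)\}\in\mathcal{U}$. A net is a map $\mathcal{D}_0\to\mathbb{C}$, written $(A_\varphi)$. $\mathcal{M}(\mathbb{C}^{\mathcal{D}_0})$ is the set of nets for which there is $m\in\mathbb{N}$ with $|A_\varphi|\le R_\varphi^{-m}$ a.e.; $\mathcal{N}(\mathbb{C}^{\mathcal{D}_0})$ is the set of nets with $|A_\varphi|<R_\varphi^{p}$ a.e. for every $p\in\mathbb{N}$. $\widehat{\mathbb{C}^{\mathcal{D}_0}}=\mathcal{M}(\mathbb{C}^{\mathcal{D}_0})/\mathcal{N}(\mathbb{C}^{\mathcal{D}_0})$ with pointwise ring operations; $\widehat{A_\varphi}$ is the class of $(A_\varphi)$; $\widehat{\mathbb{R}^{\mathcal{D}_0}}$ is the set of classes of real-valued moderate nets. $\mathbb{C}$ embeds via constant nets. *)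

From HB Require Import structures.
From mathcomp Require Import all_boot all_order all_algebra.
From mathcomp Require Import all_classical all_reals all_analysis.
From mathcomp Require Import complex.

Set Implicit Arguments.
Unset Strict Implicit.
Unset Printing Implicit Defensive.

Import Order.TTheory GRing.Theory Num.Theory.
Import numFieldNormedType.Exports.
Local Open Scope classical_set_scope.
Local Open Scope ring_scope.

Section ColombeauDefs.
Variables (R : realType) (d : nat).

Local Notation V := 'rV[R]_d.

Definition enorm (x : V) : R := Num.sqrt (\sum_(i < d) x ord0 i ^+ 2).

Definition cmod (z : R[i]) : R := Num.sqrt (complex.Re z ^+ 2 + complex.Im z ^+ 2).

Definition evec (i : 'I_d) : V := delta_mx ord0 i.

Definition partialR (i : 'I_d) (f : V -> R) : V -> R :=
  fun x => derive f x (evec i).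

Definition iter_partialR (l : seq 'I_d) (f : V -> R) : V -> R :=
  foldr partialR f l.

Definition smoothR (f : V -> R) : Prop :=
  forall l : seq 'I_d, continuous (iter_partialR l f) /\
    forall (i : 'I_d) (x : V), derivable (iter_partialR l f) x (evec i).

Definition is_test (phi : V -> R[i]) : Prop :=
  smoothR (fun x => complex.Re (phi x)) /\ smoothR (fun x => complex.Im (phi x)) /\
  exists r : R, forall x, r < enorm x -> phi x = 0.

Definition D0 := {phi : V -> R[i] | is_test phi}.

Definition Rphi (phi : D0) : R :=
  if pselect (sval phi = (fun _ => 0)) then 1
  else sup [set enorm x | x in [set x | sval phi x <> 0]].

Definition mabs (alpha : 'I_d -> nat) : nat := (\sum_(i < d) alpha i)%N.

Definition mlist (alpha : 'I_d -> nat) : seq 'I_d :=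
  flatten [seq nseq (alpha i) i | i <- enum 'I_d].

Definition dalpha (alpha : 'I_d -> nat) (f : V -> R[i]) : V -> R[i] :=
  fun x => (iter_partialR (mlist alpha) (fun y => complex.Re (f y)) x
            +i* iter_partialR (mlist alpha) (fun y => complex.Im (f y)) x)%C.

Definition xpow (x : V) (alpha : 'I_d -> nat) : R :=
  \prod_(i < d) x ord0 i ^+ alpha i.

Definition setcoord (x : V) (i : 'I_d) (t : R) : V :=
  \row_j (if j == i then t else x ord0 j).

(* Lebesgue integral over R^d, computed as an iterated integral
   (for the continuous compactly supported integrands used below this is the
   d-dimensional Lebesgue integral, by Fubini) *)
Fixpoint iint (l : seq 'I_d) (f : V -> R) (x : V) : R :=
  match l with
  | [::] => f x
  | i :: l' => Rintegral (@lebesgue_measure R) setT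
                 (fun t => iint l' f (setcoord x i t))
  end.

Definition intRd (f : V -> R) : R := iint (enum 'I_d) f 0.

Definition intCd (f : V -> R[i]) : R[i] :=
  (intRd (fun x => complex.Re (f x)) +i* intRd (fun x => complex.Im (f x)))%C.

Definition Dn (n : nat) : set D0 := [set phi : D0 |
  (forall x, complex.Im (sval phi x) = 0) /\
  (forall x, sval phi (- x) = sval phi x) /\
  Rphi phi <= n%:R^-1 /\
  intCd (sval phi) = 1 /\
  (forall alpha, (1 <= mabs alpha <= n)%N ->
      intCd (fun x => (xpow x alpha)%:C%C * sval phi x) = 0) /\
  intRd (fun x => cmod (sval phi x)) <= 1 + n%:R^-1 /\
  (forall alpha, (mabs alpha <= n)%N -> forall x,
      cmod (dalpha alpha (sval phi) x) <= Rphi phi ^- (2 * (mabs alpha + d)))].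

Definition free_ultrafilter (U : set_system D0) : Prop :=
  UltraFilter U /\ forall phi : D0, ~ U [set phi].

Definition cplus_good (U : set_system D0) : Prop :=
  forall (Gam : set D0), (Gam #<= [set: R])%card ->
  forall Rm : set D0 -> set D0,
    (forall X, finite_set X -> X `<=` Gam -> U (Rm X)) ->
    (forall X Y, finite_set X -> finite_set Y -> X `<=` Y -> Y `<=` Gam ->
        Rm Y `<=` Rm X) ->
  exists S : set D0 -> set D0,
    (forall X, finite_set X -> X `<=` Gam -> U (S X) /\ S X `<=` Rm X) /\
    (forall X Y, finite_set X -> finite_set Y -> X `<=` Gam -> Y `<=` Gam ->
        S (X `|` Y) = S X `&` S Y).

Definition net := D0 -> R[i].

Definition moderate (U : set_system D0) (A : net) : Prop :=
  exists m : nat, U [set phi | cmod (A phi) <= Rphi phi ^- m].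

Definition negligible (U : set_system D0) (A : net) : Prop :=
  forall p : nat, U [set phi | cmod (A phi) < Rphi phi ^+ p].

Definition real_net (A : net) : Prop := forall phi, complex.Im (A phi) = 0.

Definition cst (c : R[i]) : net := fun _ => c.

(* M is a subring of C^{D0} containing the constants and N is an ideal of M,
   so that Chat = M/N is a commutative ring with pointwise operations *)
Definition hat_ring (U : set_system D0) : Prop :=
  [/\ (forall c, moderate U (cst c)),
      (forall A B, moderate U A -> moderate U B ->
         moderate U (fun phi => A phi + B phi) /\
         moderate U (fun phi => - A phi) /\
         moderate U (fun phi => A phi * B phi)),
      (forall A, negligible U A -> moderate U A),
      (forall A B, negligible U A -> negligible U B ->
         negligible U (fun phi => A phi + B phi)) &
      (forall A B, negligible U A -> moderate U B ->
         negligible U (fun phi => A phi * B phi))].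

Definition hat_field (U : set_system D0) : Prop :=
  hat_ring U /\ ~ negligible U (cst 1) /\
  forall A, moderate U A -> ~ negligible U A ->
    exists B, moderate U B /\ negligible U (fun phi => A phi * B phi - 1).

(* Chat is algebraically closed (in the form of GRing.closed_field_axiom) *)
Definition hat_alg_closed (U : set_system D0) : Prop :=
  forall (n : nat) (P : nat -> net), (0 < n)%N ->
    (forall k, moderate U (P k)) ->
    exists X, moderate U X /\
      negligible U (fun phi => X phi ^+ n - \sum_(k < n) P k phi * X phi ^+ k).

(* Rhat (classes of real-valued moderate nets) is a real closed field:
   a field which is formally real (-1 is not a sum of squares), in which every
   element or its opposite is a square, and in which every polynomial of odd
   degree has a root. *)
Definition hat_real_closed (U : set_system D0) : Prop :=
  [/\ ~ negligible U (cst 1),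
      (forall A, real_net A -> moderate U A -> ~ negligible U A ->
         exists B, real_net B /\ moderate U B /\
           negligible U (fun phi => A phi * B phi - 1)),
      (forall (n : nat) (B : nat -> net),
         (forall k, real_net (B k) /\ moderate U (B k)) ->
         ~ negligible U (fun phi => 1 + \sum_(k < n) B k phi ^+ 2)),
      (forall A, real_net A -> moderate U A ->
         exists B, real_net B /\ moderate U B /\
           (negligible U (fun phi => A phi - B phi ^+ 2) \/
            negligible U (fun phi => A phi + B phi ^+ 2))) &
      (forall (n : nat) (P : nat -> net), odd n ->
         (forall k, real_net (P k) /\ moderate U (P k)) ->
         exists X, real_net X /\ moderate U X /\
           negligible U (fun phi => X phi ^+ n - \sum_(k < n) P k phi * X phi ^+ k))].

Definition hat_decomp (U : set_system D0) : Prop :=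
  (forall A, moderate U A ->
     exists B C, [/\ real_net B, moderate U B, real_net C, moderate U C &
       negligible U (fun phi => A phi - (B phi + 'i%C * C phi))]) /\
  (forall B C, real_net B -> moderate U B -> real_net C -> moderate U C ->
     negligible U (fun phi => B phi + 'i%C * C phi) ->
     negligible U B /\ negligible U C).

End ColombeauDefs.

From Pilot Require Import Defs.
From HB Require Import structures.
From mathcomp Require Import all_boot all_order all_algebra.
From mathcomp Require Import all_classical all_reals all_analysis.
From mathcomp Require Import complex polyrcf.
Import Order.TTheory GRing.Theory Num.Theory.
Local Open Scope classical_set_scope.
Local Open Scope ring_scope.
Local Open Scope complex_scope.
Set Implicit Arguments.
Unset Strict Implicit.

(* Every property in the statement holds pointwise in C or in R; the work is to
   choose the pointwise witnesses moderate.  Since U contains every D_n, along U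
   the scale R_phi is positive and tends to 0.  A root of a monic polynomial
   with moderate coefficients is moderate by Cauchy's bound
   |x| <= n max(1, |a_k|).  A non-negligible net is bounded below by some
   R_phi^p on a set of the ultrafilter U, so its pointwise inverse is moderate. *)

Section Cmod.
Variable R : realType.
Implicit Types a b z : R[i].

Lemma cmod_normc z : cmod z = Normc.normc z.
Proof. by case: z. Qed.

Lemma cmod_ge0 z : 0 <= cmod z.
Proof. exact: sqrtr_ge0. Qed.

Lemma cmodD a b : cmod (a + b) <= cmod a + cmod b.
Proof. by rewrite !cmod_normc; exact: le_normcD. Qed.

Lemma cmodM a b : cmod (a * b) = cmod a * cmod b.
Proof. by rewrite !cmod_normc; exact: Normc.normcM. Qed.

Lemma cmodN a : cmod (- a) = cmod a.
Proof. by rewrite !cmod_normc; exact: normcN. Qed.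

Lemma cmodV a : cmod a^-1 = (cmod a)^-1.
Proof. by rewrite !cmod_normc; exact: Normc.normcV. Qed.

Lemma cmod0 : cmod (0 : R[i]) = 0.
Proof. by rewrite cmod_normc; exact: Normc.normc0. Qed.

Lemma cmod1 : cmod (1 : R[i]) = 1.
Proof. by rewrite cmod_normc; exact: Normc.normc1. Qed.

Lemma cmod_eq0 a : cmod a = 0 -> a = 0.
Proof. by rewrite cmod_normc; exact: Normc.eq0_normc. Qed.

Lemma cmodR (x : R) : cmod x%:C = `|x|.
Proof. by rewrite /cmod /= expr0n /= addr0 sqrtr_sqr. Qed.

Lemma cmod_Re z : `|complex.Re z| <= cmod z.
Proof. by case: z => x y; rewrite /cmod /= -sqrtr_sqr ler_wsqrtr // lerDl sqr_ge0. Qed.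

Lemma cmod_Im z : `|complex.Im z| <= cmod z.
Proof. by case: z => x y; rewrite /cmod /= -sqrtr_sqr ler_wsqrtr // lerDr sqr_ge0. Qed.

Lemma cmod_leE z (M : R) : (cmod z <= M) = (`|z| <= M%:C).
Proof. by rewrite normc_def lecR. Qed.

Lemma Im0_RcE z : complex.Im z = 0 -> z = (complex.Re z)%:C.
Proof. by case: z => x y /= ->. Qed.

Lemma cmod_RcDi_ge (x y : R) :
  `|x| <= cmod (x%:C + 'i * y%:C) /\ `|y| <= cmod (x%:C + 'i * y%:C).
Proof.
have -> : x%:C + 'i * y%:C = x +i* y by rewrite [RHS]complexE.
by split; [exact: (cmod_Re (x +i* y)) | exact: (cmod_Im (x +i* y))].
Qed.

Lemma one_add_sqr_sum_cmod_ge1 n (b : nat -> R[i]) :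
  (forall k, complex.Im (b k) = 0) -> 1 <= cmod (1 + \sum_(k < n) b k ^+ 2).
Proof.
move=> b_real; have -> : 1 + \sum_(k < n) b k ^+ 2 =
    (1 + \sum_(k < n) complex.Re (b k) ^+ 2)%:C.
  rewrite rmorphD rmorph1 rmorph_sum /=; congr (_ + _).
  by apply: eq_bigr => k _; rewrite rmorphXn /= -Im0_RcE.
have sqr_sum_ge0 : 0 <= \sum_(k < n) complex.Re (b k) ^+ 2.
  by apply: sumr_ge0 => k _; exact: sqr_ge0.
by rewrite cmodR ger0_norm ?addr_ge0 // lerDl.
Qed.

End Cmod.

Lemma monic_root_norm_le (F : numDomainType) n (a : nat -> F) (x M : F) :
  1 <= M -> (forall k, (k < n)%N -> `|a k| <= M) ->
  x ^+ n = \sum_(k < n) a k * x ^+ k -> `|x| <= n%:R * M.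
Proof.
case: n => [|n] M1 aM; first by rewrite big_ord0 => /eqP; rewrite oner_eq0.
move=> x_root; have M0 : 0 <= M := le_trans ler01 M1.
have [x_le1|x_gt1] := real_leP (normr_real x) (real1 F).
  by rewrite (le_trans x_le1) // (le_trans M1) // ler_peMl // ler1n.
have x_gt0 : 0 < `|x| := lt_trans ltr01 x_gt1.
rewrite -(ler_pM2r (exprn_gt0 n x_gt0)) -exprS -normrX x_root.
apply: le_trans (ler_norm_sum _ _ _) _.
rewrite (_ : _ * _ = \sum_(k < n.+1) M * `|x| ^+ n); last first.
  by rewrite sumr_const card_ord -mulrA mulr_natl.
apply: ler_sum => k _; rewrite normrM normrX.
apply: ler_pM; rewrite ?exprn_ge0 ?normr_ge0 ?aM //.
by apply: ler_weXn2l; [exact: ltW | rewrite -ltnS].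
Qed.

Lemma odd_monic_root (F : rcfType) n (a : nat -> F) : odd n ->
  exists x, x ^+ n = \sum_(k < n) a k * x ^+ k.
Proof.
move=> n_odd; pose p : {poly F} := 'X^n - \poly_(k < n) a k.
have size_p : size p = n.+1.
  by rewrite /p size_polyDl size_polyXn // size_polyN ltnS size_poly.
have [|x] := @odd_poly_root F p; first by rewrite size_p /= negbK.
rewrite /root /p hornerD hornerN hornerXn horner_poly subr_eq0 => /eqP.
by exists x.
Qed.

Lemma sqrtr_le_self (F : rcfType) (y : F) : 1 <= y -> Num.sqrt y <= y.
Proof.
move=> y_ge1; have y_ge0 : 0 <= y := le_trans ler01 y_ge1.
have sqrt_ge1 : 1 <= Num.sqrt y by rewrite -sqrtr1 ler_wsqrtr.
rewrite -{2}(sqr_sqrtr y_ge0) expr2 ler_peMr //; exact: le_trans sqrt_ge1.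
Qed.

Lemma exprVn_homo (F : numFieldType) (r : F) : 0 < r -> r <= 1 ->
  {homo (fun m => r ^- m) : m m' / (m <= m')%N >-> m <= m'}.
Proof. by move=> r_gt0 r_le1 m m' le_mm'; rewrite -!exprVn ler_weXn2l ?invf_ge1. Qed.

Lemma exprVn_ge1 (F : numFieldType) (r : F) m : 0 < r -> r <= 1 -> 1 <= r ^- m.
Proof.
by move=> r_gt0 r_le1; have := exprVn_homo r_gt0 r_le1 (leq0n m); rewrite expr0 invr1.
Qed.

Section Scale.
Variables (R : realType) (d : nat).
Implicit Types phi psi : D0 R d.

Lemma mlist0 : mlist (fun _ : 'I_d => 0%N) = [::].
Proof. by rewrite /mlist; elim: (enum 'I_d). Qed.

Lemma mabs0 : mabs (fun _ : 'I_d => 0%N) = 0%N.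
Proof. by rewrite /mabs big1. Qed.

Lemma dalpha0 (f : 'rV[R]_d -> R[i]) x : dalpha (fun _ => 0%N) f x = f x.
Proof. by rewrite /dalpha mlist0 /=; case: (f x). Qed.

Lemma Rphi_ge0 phi : 0 <= Rphi phi.
Proof.
rewrite /Rphi; case: pselect => [//|phi_neq0].
have [x phix] : exists x, sval phi x <> 0.
  apply: contrapT => phi0; apply: phi_neq0; apply: funext => x.
  by apply: contrapT => phix; apply: phi0; exists x.
have [_ [_ [r phi_supp]]] := svalP phi.
apply: le_trans (sqrtr_ge0 _) _; rewrite -/(enorm x).
apply: ub_le_sup; last by exists x.
exists r => _ [y phiy <-]; rewrite leNgt; apply/negP => /phi_supp; exact: phiy.
Qed.

(* The bound on [phi] itself reads [|phi x| <= R_phi^-(2d)]; if [R_phi = 0]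
   the right-hand side is the junk value [0^-1 = 0], forcing [phi = 0]. *)
Lemma Rphi_gt0 n phi : (0 < d)%N -> Dn n phi -> 0 < Rphi phi.
Proof.
move=> d_gt0 [_ [_ [_ [_ [_ [_ dphi_le]]]]]].
rewrite lt_def Rphi_ge0 andbT; apply/eqP => Rphi0.
have phi0 : sval phi = (fun _ => 0).
  apply: funext => x; apply: cmod_eq0; apply/eqP; rewrite eq_le cmod_ge0 andbT.
  have := dphi_le (fun _ => 0%N); rewrite mabs0 => /(_ isT x).
  by rewrite dalpha0 Rphi0 add0n expr0n muln_eq0 /= (gtn_eqF d_gt0) invr0.
by move: Rphi0; rewrite /Rphi; case: pselect => [_ /eqP|]; rewrite ?oner_eq0.
Qed.

Definition Rphi_small n : set (D0 R d) :=
  [set phi | 0 < Rphi phi /\ Rphi phi <= n.+1%:R^-1].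

Lemma Rphi_smallP n phi : Rphi_small n phi ->
  [/\ 0 < Rphi phi, Rphi phi <= 1 & n.+1%:R <= (Rphi phi)^-1].
Proof.
move=> [r_gt0 r_le]; split=> //.
  by apply: le_trans r_le _; rewrite invf_le1 // ler1n.
by rewrite -(invrK (n.+1%:R : R)) lef_pV2 ?posrE ?invr_gt0 ?ltr0Sn.
Qed.

Lemma Rphi_small_in (U : set_system (D0 R d)) : Filter U -> (0 < d)%N ->
  (forall n, (0 < n)%N -> U (Dn n)) -> forall n, U (Rphi_small n).
Proof.
move=> U_filter d_gt0 U_Dn n; apply: filterS (U_Dn n.+1 isT) => phi Dphi.
by split; [exact: Rphi_gt0 Dphi | case: Dphi => _ [_ []]].
Qed.

End Scale.

(* In dimension 0 the iterated integral is evaluation at the origin, so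
   [int phi = 1] pins down [phi] and [D_1] has at most one element. *)
Lemma Dn1_dim0_eq (R : realType) (phi psi : D0 R 0) :
  Dn 1 phi -> Dn 1 psi -> phi = psi.
Proof.
have Dn1_one (chi : D0 R 0) : Dn 1 chi -> sval chi = (fun _ => 1).
  move=> [_ [_ [_ [int_chi _]]]]; apply: funext => x.
  rewrite (thinmx0 x) -int_chi /intCd /intRd.
  have -> : enum 'I_0 = [::] by apply/size0nil; rewrite size_enum_ord.
  by rewrite /=; case: (sval chi 0).
case: phi => [f f_test]; case: psi => [g g_test] /Dn1_one /= f1 /Dn1_one /= g1.
by apply: eq_exist; rewrite f1 g1.
Qed.

Local Notation negligible := Defs.negligible.

Section ColombeauField.
Variables (R : realType) (d : nat) (U : set_system (D0 R d)).
Hypotheses (U_ultra : UltraFilter U) (U_small : forall n, U (Rphi_small n)).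
Implicit Types (A B X : net R d) (P : nat -> net R d).

Lemma moderate_cst c : moderate U (cst c).
Proof.
exists 1%N; apply: filterS (U_small (Num.Def.archi_bound (cmod c))).
move=> phi /Rphi_smallP[_ _ r_inv] /=; rewrite /cst expr1.
apply: le_trans (ltW (archi_boundP (cmod_ge0 c))) (le_trans _ r_inv).
by rewrite ler_nat.
Qed.

Lemma moderateD A B : moderate U A -> moderate U B ->
  moderate U (fun phi => A phi + B phi).
Proof.
move=> [m1 Am] [m2 Bm]; exists (maxn m1 m2).+1.
apply: filterS (filterI (filterI Am Bm) (U_small 1)).
move=> phi [[/= Aphi Bphi] /Rphi_smallP[r_gt0 r_le1 r_inv]].
apply: le_trans (cmodD _ _) _.
apply: le_trans (lerD (le_trans Aphi (exprVn_homo r_gt0 r_le1 (leq_maxl m1 m2)))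
  (le_trans Bphi (exprVn_homo r_gt0 r_le1 (leq_maxr m1 m2)))) _.
rewrite -mulr2n -mulr_natr exprSr invfM.
by apply: ler_wpM2l; rewrite // invr_ge0 exprn_ge0 // ltW.
Qed.

Lemma moderateN A : moderate U A -> moderate U (fun phi => - A phi).
Proof. by move=> [m Am]; exists m; apply: filterS Am => phi /=; rewrite cmodN. Qed.

Lemma moderateM A B : moderate U A -> moderate U B ->
  moderate U (fun phi => A phi * B phi).
Proof.
move=> [m1 Am] [m2 Bm]; exists (m1 + m2)%N.
apply: filterS (filterI Am Bm) => phi [/= Aphi Bphi].
by rewrite cmodM exprD invfM ler_pM ?cmod_ge0.
Qed.

Lemma moderate_le A B : moderate U A ->
  (forall phi, cmod (B phi) <= cmod (A phi)) -> moderate U B.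
Proof. by move=> [m Am] BA; exists m; apply: filterS Am => phi; exact: le_trans. Qed.

Lemma negligible_moderate A : negligible U A -> moderate U A.
Proof.
move=> A_negl; exists 0%N; apply: filterS (A_negl 0%N) => phi /= /ltW.
by rewrite expr0 invr1.
Qed.

Lemma negligibleD A B : negligible U A -> negligible U B ->
  negligible U (fun phi => A phi + B phi).
Proof.
move=> A_negl B_negl p.
apply: filterS (filterI (filterI (A_negl p.+1) (B_negl p.+1)) (U_small 1)).
move=> phi [[/= Aphi Bphi] [r_gt0 r_le]].
apply: le_lt_trans (cmodD _ _) (lt_le_trans (ltrD Aphi Bphi) _).
rewrite -mulr2n -mulr_natr exprSr -mulrA ger_pMr ?exprn_gt0 //.
by rewrite -ler_pdivlMr // div1r.
Qed.

Lemma negligibleM A B : negligible U A -> moderate U B ->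
  negligible U (fun phi => A phi * B phi).
Proof.
move=> A_negl [m Bm] p.
apply: filterS (filterI (filterI (A_negl (p + m)%N) Bm) (U_small 0)).
move=> phi [[/= Aphi Bphi] [r_gt0 _]].
rewrite cmodM; apply: le_lt_trans (ler_wpM2l (cmod_ge0 _) Bphi) _.
rewrite -[X in _ < X](mulfK (expf_neq0 m (lt0r_neq0 r_gt0))) -exprD.
by rewrite ltr_pM2r ?invr_gt0 ?exprn_gt0.
Qed.

Lemma hat_ringP : hat_ring U.
Proof.
split; [exact: moderate_cst | | exact: negligible_moderate | exact: negligibleD
       | exact: negligibleM].
move=> A B Am Bm.
by split; [exact: moderateD | split; [exact: moderateN | exact: moderateM]].
Qed.

Lemma negligible_ae0 A : U [set phi | A phi = 0] -> negligible U A.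
Proof.
move=> A0 p; apply: filterS (filterI A0 (U_small 0)) => phi [/= -> [r_gt0 _]].
by rewrite cmod0 exprn_gt0.
Qed.

Lemma negligible_eq0 A : (forall phi, A phi = 0) -> negligible U A.
Proof.
by move=> A0; apply: negligible_ae0; apply: filterS filterT => phi _; exact: A0.
Qed.

Lemma not_negligible_cst1 : ~ negligible U (cst 1).
Proof. by move=> /(_ 0%N) /filter_ex[phi] /=; rewrite /cst cmod1 expr0 ltxx. Qed.

Lemma not_negligible_ge A : ~ negligible U A ->
  exists p, U [set phi | Rphi phi ^+ p <= cmod (A phi)].
Proof.
move=> A_not_negl.
have [p not_small] : exists p, ~ U [set phi | cmod (A phi) < Rphi phi ^+ p].
  apply: contrapT => all_small; apply: A_not_negl => p.
  by apply: contrapT => not_small; apply: all_small; exists p.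
exists p; have [/not_small//|] := in_ultra_setVsetC
  [set phi | cmod (A phi) < Rphi phi ^+ p] U_ultra.
by apply: filterS => phi /= /negP; rewrite -leNgt.
Qed.

(* The inverse is taken pointwise: it is only wrong where [A phi = 0], a set
   outside [U] since there [A] is below every power of [R_phi]. *)
Lemma inverse_not_negligible A : ~ negligible U A ->
  moderate U (fun phi => (A phi)^-1) /\
  negligible U (fun phi => A phi * (A phi)^-1 - 1).
Proof.
move=> /not_negligible_ge[p A_ge].
have A_big : U [set phi | 0 < Rphi phi ^+ p <= cmod (A phi)].
  apply: filterS (filterI A_ge (U_small 0)) => phi [/= Aphi [r_gt0 _]].
  by rewrite Aphi exprn_gt0.
split.
  exists p; apply: filterS A_big => phi /= /andP[r_gt0 Aphi].
  by rewrite cmodV lef_pV2 ?posrE // (lt_le_trans r_gt0).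
apply: negligible_ae0; apply: filterS A_big => phi /= /andP[r_gt0 Aphi].
rewrite mulfV ?subrr //; apply: contraTneq Aphi => ->.
by rewrite cmod0 -ltNge.
Qed.

Lemma hat_fieldP : hat_field U.
Proof.
split; [exact: hat_ringP | split; first exact: not_negligible_cst1].
move=> A _ /inverse_not_negligible[inv_moderate inv_right].
by exists (fun phi => (A phi)^-1).
Qed.

Lemma moderate_family P : (forall k, moderate U (P k)) -> forall n, exists m,
  U [set phi | forall k, (k < n)%N -> cmod (P k phi) <= Rphi phi ^- m].
Proof.
move=> Pm; elim=> [|n [m Pm_lt]]; first by exists 0%N; apply: filterS filterT.
have [m' Pnm] := Pm n; exists (maxn m m').
apply: filterS (filterI (filterI Pm_lt Pnm) (U_small 0)).
move=> phi [[/= Pphi Pnphi] /Rphi_smallP[r_gt0 r_le1 _]] k.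
rewrite ltnS leq_eqVlt => /orP[/eqP->|lt_kn].
  exact: le_trans Pnphi (exprVn_homo r_gt0 r_le1 (leq_maxr m m')).
exact: le_trans (Pphi k lt_kn) (exprVn_homo r_gt0 r_le1 (leq_maxl m m')).
Qed.

Lemma moderate_monic_root n P X : (forall k, moderate U (P k)) ->
  (forall phi, X phi ^+ n = \sum_(k < n) P k phi * X phi ^+ k) -> moderate U X.
Proof.
move=> Pm X_root; have [m Pphi_le] := moderate_family Pm n; exists m.+1.
apply: filterS (filterI Pphi_le (U_small n)).
move=> phi [/= Pphi /Rphi_smallP[r_gt0 r_le1 r_inv]].
have M_ge1 : 1%:C <= (Rphi phi ^- m)%:C :> R[i] by rewrite lecR exprVn_ge1.
have P_le k : (k < n)%N -> `|P k phi| <= (Rphi phi ^- m)%:C.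
  by move=> lt_kn; rewrite -cmod_leE Pphi.
have := monic_root_norm_le M_ge1 P_le (X_root phi).
have -> : n%:R * (Rphi phi ^- m)%:C = (n%:R * Rphi phi ^- m)%:C :> R[i].
  by rewrite rmorphM rmorph_nat.
rewrite -cmod_leE => /le_trans; apply.
rewrite exprSr invfM [X in _ <= X]mulrC; apply: ler_wpM2r.
  by rewrite invr_ge0 exprn_ge0 // ltW.
by apply: le_trans r_inv; rewrite ler_nat.
Qed.

Lemma hat_alg_closedP : hat_alg_closed U.
Proof.
move=> n P n_gt0 Pm.
have [X X_root] := choice (fun phi => solve_monicpoly (fun k => P k phi) n_gt0).
exists X; split; first exact: moderate_monic_root Pm X_root.
by apply: negligible_eq0 => phi; rewrite X_root subrr.
Qed.

Lemma inverse_real A : real_net A -> real_net (fun phi => (A phi)^-1).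
Proof. by move=> A_real phi; rewrite (Im0_RcE (A_real phi)) -fmorphV. Qed.

Lemma not_negligible_one_add_sqr n (B : nat -> net R d) :
  (forall k, real_net (B k)) ->
  ~ negligible U (fun phi => 1 + \sum_(k < n) B k phi ^+ 2).
Proof.
move=> B_real /(_ 0%N) /filter_ex[phi] /=.
rewrite expr0; apply/negP; rewrite -leNgt.
exact: (@one_add_sqr_sum_cmod_ge1 _ n (fun k => B k phi)) (fun k => B_real k phi).
Qed.

Lemma real_sqrt_or_sqrtN A : real_net A -> moderate U A ->
  exists B, real_net B /\ moderate U B /\
    (negligible U (fun phi => A phi - B phi ^+ 2) \/
     negligible U (fun phi => A phi + B phi ^+ 2)).
Proof.
move=> A_real [m Am]; pose a phi := complex.Re (A phi).
have A_Rc phi : A phi = (a phi)%:C := Im0_RcE (A_real phi).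
exists (fun phi => (Num.sqrt `|a phi|)%:C); split=> //; split.
  exists m; apply: filterS (filterI Am (U_small 0)).
  move=> phi [/= Aphi /Rphi_smallP[r_gt0 r_le1 _]].
  rewrite cmodR ger0_norm ?sqrtr_ge0 //.
  have a_le : `|a phi| <= Rphi phi ^- m := le_trans (cmod_Re _) Aphi.
  exact: le_trans (ler_wsqrtr a_le) (sqrtr_le_self (exprVn_ge1 m r_gt0 r_le1)).
have [a_ge0|a_lt0] := in_ultra_setVsetC [set phi | 0 <= a phi] U_ultra.
  left; apply: negligible_ae0; apply: filterS a_ge0 => phi /= a_ge0.
  by rewrite A_Rc -rmorphXn -rmorphB /= sqr_sqrtr ?normr_ge0 // ger0_norm // subrr.
right; apply: negligible_ae0; apply: filterS a_lt0 => phi /= /negP.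
rewrite -ltNge => a_lt0.
by rewrite A_Rc -rmorphXn -rmorphD /= sqr_sqrtr ?normr_ge0 // ltr0_norm // addrN.
Qed.

Lemma hat_real_closedP : hat_real_closed U.
Proof.
split.
- exact: not_negligible_cst1.
- move=> A A_real _ /inverse_not_negligible[inv_moderate inv_right].
  by exists (fun phi => (A phi)^-1); split; [exact: inverse_real|].
- by move=> n B B_rm; apply: not_negligible_one_add_sqr => k; case: (B_rm k).
- exact: real_sqrt_or_sqrtN.
move=> n P n_odd P_rm.
have [x x_root] := choice (fun phi =>
  odd_monic_root (fun k => complex.Re (P k phi)) n_odd).
pose X phi := (x phi)%:C.
have X_root phi : X phi ^+ n = \sum_(k < n) P k phi * X phi ^+ k.
  rewrite /X -rmorphXn x_root rmorph_sum; apply: eq_bigr => k _.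
  by rewrite {2}(Im0_RcE ((P_rm k).1 phi)) rmorphM rmorphXn.
exists X; split=> //; split.
  by apply: moderate_monic_root X_root => k; case: (P_rm k).
by apply: negligible_eq0 => phi; rewrite X_root subrr.
Qed.

Lemma hat_decompP : hat_decomp U.
Proof.
split=> [A Am|B C B_real _ C_real _ BC_negl].
  exists (fun phi => (complex.Re (A phi))%:C), (fun phi => (complex.Im (A phi))%:C).
  split=> [//||//||].
  - by apply: (moderate_le Am) => phi; rewrite cmodR cmod_Re.
  - by apply: (moderate_le Am) => phi; rewrite cmodR cmod_Im.
  - by apply: negligible_eq0 => phi; rewrite -complexE subrr.
have BC_ge phi := cmod_RcDi_ge (complex.Re (B phi)) (complex.Re (C phi)).
split=> p; apply: filterS (BC_negl p) => phi /=;
  rewrite (Im0_RcE (B_real phi)) (Im0_RcE (C_real phi)) cmodR; apply: le_lt_trans.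
  exact: (BC_ge phi).1.
exact: (BC_ge phi).2.
Qed.

End ColombeauField.

Lemma Dn1_not_free (R : realType) (U : set_system (D0 R 0)) :
  free_ultrafilter U -> ~ U (Dn 1).
Proof.
move=> [U_ultra U_free] U_Dn1; have [phi Dphi] := filter_ex U_Dn1.
apply: (U_free phi); apply: filterS U_Dn1 => psi Dpsi.
exact: Dn1_dim0_eq Dpsi Dphi.
Qed.

Theorem theorem4p2 (R : realType) (d : nat) (U : set_system (D0 R d)) :
  free_ultrafilter U ->
  (forall n : nat, (0 < n)%N -> U (Dn n)) ->
  cplus_good U ->
  [/\ hat_field U, hat_alg_closed U, hat_real_closed U & hat_decomp U].
Proof.
move=> U_free U_Dn _; have [U_ultra _] := U_free.
have [d0|d_gt0] := posnP d.
  by subst d; case: (Dn1_not_free U_free (U_Dn 1%N isT)).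
have U_filter : Filter U := @filter_filter _ _ (@ultra_proper _ _ U_ultra).
have U_small := Rphi_small_in U_filter d_gt0 U_Dn.
split; [exact: hat_fieldP U_ultra U_small | exact: hat_alg_closedP U_ultra U_small
       | exact: hat_real_closedP U_ultra U_small | exact: hat_decompP U_ultra U_small].
Qed.
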